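(* Let $s\ge1$. The expected number of pierced circles in a random meander graph $\Gamma^1_{2s-1}$ is $\frac{O(s,1)}{C_s^2}$, where $O(s,1)=\binom{2s-2}{1}C_{s-1}^2=(2s-2)C_{s-1}^2$.
   Context: A $p$-string of length $s$ is a correctly matched (balanced) string of $s$ left and $s$ right parentheses; there are $C_s=\frac{1}{s+1}\binom{2s}{s}$ (Catalan number) of them. Given two $p$-strings $U$ (upper) and $W$ (lower) of length $s$, the meander graph $\Gamma^1_{2s-1}$ is obtained by marking points $0,1,\dots,2s$ on the $x$-axis, taking the segment $[0,2s]$, joining points $a,b$ by a semicircle in the upper half-plane for each matched pair of $U$ at positions $a<b$ (positions $1,\dots,2s$), and joining points $a-1,b-1$ by a semicircle in the lower half-plane for each matched pair of $W$ at positions $a<b$; the vertices are the points $1,\dots,2s-1$. The graph has a pierced circle at position $i$ ($1\le i\le 2s-2$) if the vertices $i$ and $i+1$ are joined both by an upper semicircle and by a lower semicircle. A random meander graph is obtained by choosing $(U,W)$ uniformly among the $C_s^2$ pairs. *)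

From mathcomp Require Import all_boot all_order all_algebra.
Set Implicit Arguments. Unset Strict Implicit. Unset Printing Implicit Defensive.

(* A parenthesis string is a seq bool: true = '(' , false = ')'. *)

Definition balanced (t : seq bool) : bool :=
  all (fun k => count negb (take k t) <= count id (take k t)) (iota 0 (size t).+1)
  && (count id t == count negb t).

(* 1-based positions a < b form a matched pair of t: position a holds '(',
   position b holds ')', and the substring strictly between them is balanced. *)
Definition matched (t : seq bool) (a b : nat) : bool :=
  [&& 0 < a, a < b, b <= size t, nth false t a.-1, ~~ nth false t b.-1
    & balanced (drop a (take b.-1 t))].

Definition pstring (s : nat) := {t : (s.*2).-tuple bool | balanced t}.

Definition catalan (s : nat) : nat := 'C(s.*2, s) %/ s.+1.

(* Meander graph Gamma^1_{2s-1}: upper arc {a,b} for each matched pair (a,b) of U;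
   lower arc {a-1,b-1} for each matched pair (a,b) of W. *)
Definition upper_arc (s : nat) (U : pstring s) (x y : nat) : bool :=
  matched (val U) x y.
Definition lower_arc (s : nat) (W : pstring s) (x y : nat) : bool :=
  matched (val W) x.+1 y.+1.

Definition pierced (s : nat) (U W : pstring s) (i : nat) : bool :=
  [&& 1 <= i, i <= (s.*2) - 2, upper_arc U i i.+1 & lower_arc W i i.+1].

Definition num_pierced (s : nat) (U W : pstring s) : nat :=
  \sum_(1 <= i < (s.*2).-1) pierced U W i.

Definition expected_pierced (s : nat) : rat :=
  ((\sum_(U : pstring s) \sum_(W : pstring s) num_pierced U W)%:R
   / (#|{: pstring s}| ^ 2)%:R)%R.

From mathcomp Require Import all_boot all_order all_algebra.
From mathcomp Require Import zify.
Set Implicit Arguments. Unset Strict Implicit. Unset Printing Implicit Defensive.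

(* A pierced circle at i means that (i, i+1) is matched in U and (i+1, i+2) is
   matched in W, so summing over all pairs (U, W) factors, position by position,
   into a product of two counts.  A p-string of length s in which two given
   adjacent positions are matched is a p-string of length s-1 with "()" inserted
   there, so each factor is C_{s-1}, and there are 2s-2 positions.  That there
   are C_s p-strings of length s is the ballot formula
   N(n, a) (a+1) = binom(n, a) (2a+1-n) for the number of words of length n with
   a left parentheses none of whose prefixes has more ')' than '('. *)

Fixpoint nwords n (P : seq bool -> bool) : nat :=
  if n is n'.+1 then nwords n' (fun t => P (true :: t)) + nwords n' (fun t => P (false :: t))
  else P [::].

Lemma eq_nwords n P Q : (forall t, size t = n -> P t = Q t) -> nwords n P = nwords n Q.
Proof.
elim: n P Q => [|n IHn] P Q eqPQ /=; first by rewrite eqPQ.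
by congr addn; apply: IHn => t szt; apply: eqPQ; rewrite /= szt.
Qed.

Lemma nwords_pred0 n : nwords n (fun _ => false) = 0.
Proof. by elim: n => //= n ->. Qed.

Lemma nwords_andr n P (b : bool) : nwords n (fun t => P t && b) = b * nwords n P.
Proof.
case: b; first by rewrite mul1n; apply: eq_nwords => t _; rewrite andbT.
by rewrite mul0n -(nwords_pred0 n); apply: eq_nwords => t _; rewrite andbF.
Qed.

Lemma nwords_rcons n P : nwords n.+1 P =
  nwords n (fun t => P (rcons t true)) + nwords n (fun t => P (rcons t false)).
Proof.
elim: n P => [|n IHn] P //.
rewrite -[LHS]/(nwords n.+1 (fun t => P (true :: t)) + nwords n.+1 (fun t => P (false :: t))).
rewrite (IHn (fun t => P (true :: t))) (IHn (fun t => P (false :: t))).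
exact: addnACA.
Qed.

Lemma sum_tuple_nwords n (P : seq bool -> bool) :
  \sum_(t : n.-tuple bool) P t = nwords n P.
Proof.
elim: n P => [|n IHn] P.
  by rewrite (big_pred1 [tuple]) // => t; apply/esym/eqP/tuple0.
rewrite /= -!IHn (reindex (fun p : bool * n.-tuple bool => [tuple of p.1 :: p.2])).
  by rewrite -(pair_big xpredT xpredT (fun b (t : n.-tuple bool) => P (b :: t) : nat)) big_bool.
exists (fun t : n.+1.-tuple bool => (thead t, [tuple of behead t])) => [[b t] _|t _].
  by congr pair; apply: val_inj.
by case/tupleP: t => b t; apply: val_inj.
Qed.

Lemma nwords_insert_pair p n P :
  nwords (p + n.+2)
    (fun t => P (take p t ++ drop p.+2 t) && nth false t p && ~~ nth false t p.+1)
  = nwords (p + n) P.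
Proof.
elim: p P => [|p IHp] P /=; last first.
  by rewrite (IHp (fun u => P (true :: u))) (IHp (fun u => P (false :: u))).
rewrite !nwords_andr !mul0n !mul1n add0n !addn0.
by apply: eq_nwords => t _; rewrite drop0.
Qed.

Fixpoint balanced_from h (t : seq bool) : bool :=
  match t with
  | [::] => h == 0
  | true :: t' => balanced_from h.+1 t'
  | false :: t' => (0 < h) && balanced_from h.-1 t'
  end.

Lemma balanced_fromE h t :
  all (fun k => count negb (take k t) <= h + count id (take k t)) (iota 0 (size t).+1)
  && (h + count id t == count negb t) = balanced_from h t.
Proof.
have all_iota0S P n : all P (iota 0 n.+1) = P 0 && all (fun k => P k.+1) (iota 0 n).
  by rewrite -[iota 0 _]/(0 :: iota (1 + 0) n) iotaDl /= all_map.
elim: t h => [|b t IHt] h; first by rewrite /= addn0.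
rewrite [RHS]/= all_iota0S.
case: b; last case: h => [|h]; last 2 first.
- by rewrite /= take0.
- rewrite -IHt; move: (iota 0 _) => I /=.
  by congr andb; apply: eq_all => k; apply/idP/idP; lia.
- rewrite -IHt; move: (iota 0 _) => I /=.
  congr andb; last by apply/idP/idP; lia.
  by apply: eq_all => k; apply/idP/idP; lia.
Qed.

Lemma balancedE t : balanced t = balanced_from 0 t.
Proof. by rewrite -balanced_fromE. Qed.

Lemma balanced_from_insert_pair h x y :
  balanced_from h (x ++ true :: false :: y) = balanced_from h (x ++ y).
Proof. by elim: x h => [|[] x IHx] h //=; rewrite IHx. Qed.

Definition ballot (t : seq bool) : bool :=
  all (fun k => count negb (take k t) <= count id (take k t)) (iota 0 (size t).+1).

Lemma count_negb t : count negb t = size t - count id t.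
Proof. by rewrite -(count_predC id t) addKn. Qed.

Lemma ballot_rcons t b :
  ballot (rcons t b) = ballot t && (count negb (rcons t b) <= count id (rcons t b)).
Proof.
rewrite /ballot size_rcons -addn1 iotaD all_cat all_seq1 add0n take_oversize ?size_rcons //.
congr andb; apply: eq_in_all => k; rewrite mem_iota ltnS => le_k_t.
by rewrite -cats1 takel_cat.
Qed.

Lemma ballot_count t : ballot t -> count negb t <= count id t.
Proof. by move/allP/(_ (size t)); rewrite take_size mem_iota ltnS leqnn; apply. Qed.

Definition ballot_number n a := nwords n (fun t => ballot t && (count id t == a)).

Lemma ballot_number0 a : ballot_number 0 a = (a == 0).
Proof. by case: a. Qed.

Lemma ballot_numberS n a :
  ballot_number n.+1 a = (0 < a) * ballot_number n a.-1 + (n.+1 <= a + a) * ballot_number n a.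
Proof.
rewrite /ballot_number nwords_rcons -!nwords_andr.
congr addn; apply: eq_nwords => t szt; rewrite ballot_rcons -cats1 !count_cat /= !addn0.
all: have [/ballot_count|] := boolP (ballot t); rewrite ?andbF // !count_negb szt.
all: lia.
Qed.

(* With truncated subtraction both sides vanish when 2a + 1 < n. *)
Lemma ballot_numberE n a : ballot_number n a * a.+1 = 'C(n, a) * ((a + a).+1 - n).
Proof.
elim: n a => [|n IHn] [|a].
- by rewrite ballot_number0.
- by rewrite ballot_number0 bin0n.
- by rewrite ballot_numberS bin0 subSS sub0n muln0.
rewrite ballot_numberS /= mul1n binS.
have IHa := IHn a; have IHa1 := IHn a.+1.
case: (leqP n.+1 (a.+1 + a.+1)) => [n_le|n_gt]; last by rewrite mul0n addn0; nia.
rewrite mul1n; case: (ltnP n a) => [n_lt|a_le].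
  have C0 : 'C(n, a) = 0 by rewrite bin_small.
  have C1 : 'C(n, a.+1) = 0 by rewrite bin_small // ltnW.
  by move: IHa IHa1; rewrite C0 C1 !mul0n; nia.
set u := (a + a).+1 - n in IHa.
have -> : (a.+1 + a.+1).+1 - n.+1 = u.+1 by lia.
have {}IHa1 : ballot_number n a.+1 * a.+2 = 'C(n, a.+1) * u.+2.
  by rewrite IHa1; congr muln; lia.
apply/eqP; rewrite -(eqn_pmul2l (ltn0Sn a)); apply/eqP.
by have := mul_bin_left n a; nia.
Qed.

Lemma sum_pstring s (P : seq bool -> bool) :
  \sum_(U : pstring s) P (val U) = nwords s.*2 (fun t => balanced t && P t).
Proof.
rewrite -(big_sub [pred t : (s.*2).-tuple bool | balanced t] (fun t => P t : nat)).
rewrite big_mkcond -(sum_tuple_nwords _ (fun t => balanced t && P t)).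
by apply: eq_bigr => t _; rewrite inE; case: balanced.
Qed.

Lemma card_pstring s : #|{: pstring s}| = nwords s.*2 balanced.
Proof.
rewrite -sum1_card (sum_pstring s (fun _ => true)).
by apply: eq_nwords => t _; rewrite andbT.
Qed.

Lemma catalan_card s : catalan s = #|{: pstring s}|.
Proof.
have balanced_ballot t : size t = s.*2 ->
    balanced t = ballot t && (count id t == s).
  move=> szt; rewrite /balanced -/(ballot t) count_negb szt.
  by case: ballot => //=; apply/eqP/eqP; lia.
rewrite card_pstring (eq_nwords balanced_ballot) -/(ballot_number _ s).
have := ballot_numberE s.*2 s; rewrite addnn subSnn muln1 /catalan => <-.
by rewrite mulnK.
Qed.

Lemma matched_adjacent t p : p.+2 <= size t ->
  matched t p.+1 p.+2 = nth false t p && ~~ nth false t p.+1.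
Proof.
move=> szt; rewrite /matched szt ltnSn drop_oversize ?andbT //.
by rewrite size_takel // ltnW.
Qed.

Lemma balanced_matched_adjacent t p : p.+2 <= size t ->
  balanced t && matched t p.+1 p.+2 =
  balanced (take p t ++ drop p.+2 t) && nth false t p && ~~ nth false t p.+1.
Proof.
move=> szt; rewrite matched_adjacent // !balancedE andbA.
have t_split : t = take p t ++ [:: nth false t p, nth false t p.+1 & drop p.+2 t].
  by rewrite -!drop_nth ?cat_take_drop // ltnW.
rewrite [in balanced_from 0 t]t_split.
by case: (nth false t p) (nth false t p.+1) => [] [];
  rewrite ?andbF ?andbT // balanced_from_insert_pair.
Qed.

Lemma sum_matched_adjacent s j : 0 < j < s.*2 ->
  \sum_(U : pstring s) matched (val U) j j.+1 = #|{: pstring s.-1}|.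
Proof.
case: j => // p /= lt_p.
rewrite (sum_pstring s (fun t => matched t p.+1 p.+2)) card_pstring.
rewrite (eq_nwords (Q := fun t =>
    balanced (take p t ++ drop p.+2 t) && nth false t p && ~~ nth false t p.+1)); last first.
  by move=> t szt; rewrite balanced_matched_adjacent // szt.
have -> : s.*2 = p + (s.*2 - p.+2).+2 by lia.
by rewrite nwords_insert_pair; congr nwords; lia.
Qed.

Lemma num_piercedE s (U W : pstring s) : num_pierced U W =
  \sum_(1 <= i < (s.*2).-1) matched (val U) i i.+1 * matched (val W) i.+1 i.+2.
Proof.
apply: eq_big_nat => i /andP[i_gt0 i_lt].
by rewrite /pierced /upper_arc /lower_arc i_gt0 (_ : i <= s.*2 - 2) ?mulnb //; lia.
Qed.

Lemma sum_num_pierced s : \sum_(U : pstring s) \sum_(W : pstring s) num_pierced U W =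
  \sum_(1 <= i < (s.*2).-1)
    (\sum_(U : pstring s) matched (val U) i i.+1) *
    (\sum_(W : pstring s) matched (val W) i.+1 i.+2).
Proof.
rewrite (eq_bigr _ (fun U _ => eq_bigr _ (fun W _ => num_piercedE U W))).
under eq_bigr => U _ do rewrite exchange_big.
rewrite exchange_big.
by apply: eq_bigr => i _; rewrite big_distrlr.
Qed.

Theorem proposition3p5 (s : nat) (hs : 1 <= s) :
  expected_pierced s =
  ((((s.*2 - 2) * catalan s.-1 ^ 2)%N)%:R / ((catalan s ^ 2)%N)%:R)%R.
Proof.
rewrite /expected_pierced !catalan_card sum_num_pierced.
rewrite (eq_big_nat _ _ (F2 := fun _ => #|{: pstring s.-1}| ^ 2)) => [|i /andP[i_gt0 i_lt]].
  by rewrite sum_nat_const_nat (_ : (s.*2).-1 - 1 = s.*2 - 2) //; lia.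
by rewrite !sum_matched_adjacent ?mulnn //; lia.
Qed.
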